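(* Let $q\ge 2$ and $k\ge 1$ be fixed integers and let $\Gamma$ be a finite, non-trivial constraint language consisting of $k$-ary relations over $[q]=\{0,1,\dots,q-1\}$. Then, for deciding satisfiability of instances of $\mathsf{CSP}(\Gamma)$ on $n$ variables presented as a single-pass stream of constraints: (a) there exists a deterministic single-pass streaming algorithm using $O_{q,k}(\mathsf{NRD}_n(\Gamma)\log n)$ bits of space; and (b) no randomized single-pass streaming algorithm (succeeding with probability at least $2/3$ on every input) uses $o(\mathsf{NRD}_n(\Gamma))$ bits of space.
   Context: An instance of $\mathsf{CSP}(\Gamma)$ on variables $x_1,\dots,x_n$ taking values in $[q]$ is a finite set of constraints, each of the form $\{R,(x_{i_1}+\lambda_{i_1},\dots,x_{i_k}+\lambda_{i_k})\}$ with $R\in\Gamma$, $(i_1,\dots,i_k)\in[n]^k$ and shifts $\lambda_{i_j}\in[q]$; an assignment $a\in[q]^n$ satisfies it if $(a_{i_1}+\lambda_{i_1},\dots,a_{i_k}+\lambda_{i_k})\in R$, with arithmetic modulo $q$. $\mathrm{Sat}(I)$ is the set of assignments satisfying every constraint of $I$; $I$ is satisfiable if $\mathrm{Sat}(I)\neq\emptyset$. A constraint $C\in I$ is redundant if $\mathrm{Sat}(I\setminus\{C\})=\mathrm{Sat}(I)$; $I$ is non-redundant if none of its constraints is redundant. $\mathsf{NRD}_n(\Gamma)$ is the maximum number of constraints in a non-redundant instance of $\mathsf{CSP}(\Gamma)$ on $n$ variables. $\Gamma$ is non-trivial if every relation in $\Gamma$ is non-empty and at least one relation in $\Gamma$ is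 a proper subset of $[q]^k$. In the streaming model the constraints arrive one at a time and at the end the algorithm must output whether the instance is satisfiable; a deterministic algorithm must always be correct, a randomized one correct with probability at least $2/3$ on every input. Hidden constants may depend on $q$, $k$ and $\Gamma$. *)

From HB Require Import structures.
From mathcomp Require Import all_boot all_order all_algebra.
From mathcomp Require Import reals.
Import Order.TTheory GRing.Theory Num.Theory.
Set Implicit Arguments. Unset Strict Implicit. Unset Printing Implicit Defensive.

(* Domain [q] = Z/qZ (requires 2 <= q, assumed in the theorem).
   A k-ary relation over [q] is a set of k-tuples (functions 'I_k -> 'Z_q). *)
Definition rel (q k : nat) := {set {ffun 'I_k -> 'Z_q}}.

(* A constraint on n variables: (R, (i_1..i_k), shifts per position). *)
Definition constraint (q k n : nat) :=
  ({set {ffun 'I_k -> 'Z_q}} * {ffun 'I_k -> 'I_n} * {ffun 'I_k -> 'Z_q})%type.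

Section CSP.
Variables (q k n : nat).
Implicit Types (Gamma : {set {set {ffun 'I_k -> 'Z_q}}})
  (c : constraint q k n) (I : {set constraint q k n}).

(* a constraint of CSP(Gamma): R in Gamma, and the shift lambda_{i_j} only
   depends on the variable x_{i_j} (repeated variables carry equal shifts). *)
Definition cvalid Gamma c :=
  (c.1.1 \in Gamma) &&
  [forall j1, forall j2, (c.1.2 j1 == c.1.2 j2) ==> (c.2 j1 == c.2 j2)].

Definition is_instance Gamma I := [forall c in I, cvalid Gamma c].

Definition csat (a : {ffun 'I_n -> 'Z_q}) c :=
  [ffun j => (a (c.1.2 j) + c.2 j)%R] \in c.1.1.

Definition Sat I : {set {ffun 'I_n -> 'Z_q}} :=
  [set a | [forall c in I, csat a c]].

Definition satisfiable I := Sat I != set0.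

Definition redundant I c := Sat (I :\ c) == Sat I.

Definition nonredundant I := [forall c in I, ~~ redundant I c].

Definition NRD Gamma : nat :=
  \max_(I : {set constraint q k n} | is_instance Gamma I && nonredundant I) #|I|.

Definition stream_ok Gamma (l : seq (constraint q k n)) := all (cvalid Gamma) l.
Definition instance_of (l : seq (constraint q k n)) : {set constraint q k n} :=
  [set c in l].

(* Deterministic single-pass streaming algorithm with s bits of memory:
   memory states are 'I_(2^s). *)
Record det_alg (s : nat) := DetAlg {
  d_init : 'I_(2 ^ s);
  d_step : 'I_(2 ^ s) -> constraint q k n -> 'I_(2 ^ s);
  d_out  : 'I_(2 ^ s) -> bool }.

Definition d_run s (A : det_alg s) (l : seq (constraint q k n)) :=
  d_out A (foldl (d_step A) (d_init A) l).

Definition det_decides Gamma s (A : det_alg s) :=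
  forall l, stream_ok Gamma l -> d_run A l = satisfiable (instance_of l).

(* Randomized single-pass streaming algorithm with s bits of memory:
   random initial state, random transitions (Markov kernel) and random
   output; r_out u is the probability of answering "satisfiable". *)
Record rand_alg (R : realType) (s : nat) := RandAlg {
  r_init : 'I_(2 ^ s) -> R;
  r_step : 'I_(2 ^ s) -> constraint q k n -> 'I_(2 ^ s) -> R;
  r_out  : 'I_(2 ^ s) -> R }.

Local Open Scope ring_scope.

Definition rand_wf (R : realType) s (A : rand_alg R s) : Prop :=
  (forall u, 0 <= r_init A u) /\ (\sum_u r_init A u = 1) /\
  (forall u c, (forall v, 0 <= r_step A u c v) /\ \sum_v r_step A u c v = 1) /\
  (forall u, 0 <= r_out A u <= 1).

Definition r_dist (R : realType) s (A : rand_alg R s) (l : seq (constraint q k n))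
  : 'I_(2 ^ s) -> R :=
  foldl (fun d c v => \sum_u d u * r_step A u c v) (r_init A) l.

Definition r_accept (R : realType) s (A : rand_alg R s) l : R :=
  \sum_u r_dist A l u * r_out A u.

Definition rand_decides (R : realType) Gamma s (A : rand_alg R s) : Prop :=
  rand_wf A /\
  forall l, stream_ok Gamma l ->
    if satisfiable (instance_of l) then 2 / 3 <= r_accept A l
    else r_accept A l <= 1 / 3.

Local Close Scope ring_scope.
End CSP.

Definition nontrivial (q k : nat) (Gamma : {set {set {ffun 'I_k -> 'Z_q}}}) :=
  [forall R in Gamma, R != set0] && [exists R in Gamma, R != setT].

(* Upper bound: the algorithm only remembers Sat of the constraints seen so far.  Each such set
   is Sat J for a non-redundant sub-instance J, and there are at most (#constraints + 1)^NRD
   of those, so an index into their list fits in O(NRD log n) bits.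

   Lower bound: fix a non-redundant instance I with NRD constraints.  For c in I, an assignment
   a violating c but no other constraint of I yields the set T_c of all shifts of c satisfied
   by a, and for S included in I, S with T_c is satisfiable iff c is not in S.  Streaming S and
   then T_c therefore turns the algorithm into a random access code for the indicator vector of
   S, and a random access code for N bits with error 1/3 needs a memory of Omega(N) bits. *)

From HB Require Import structures.
From mathcomp Require Import all_boot all_order all_algebra reals.
From mathcomp Require Import ring lra zify.
From mathcomp Require Import sequences exp.
Import Order.TTheory GRing.Theory Num.Theory.

Set Implicit Arguments.
Unset Strict Implicit.
Unset Printing Implicit Defensive.

Lemma card_small_sets (T : finType) (m : nat) :
  #|[set J : {set T} | #|J| <= m]| <= #|T|.+1 ^ m.
Proof.
elim: m => [|m IH].
  rewrite expn0 -(cards1 (set0 : {set T})) subset_leq_card //.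
  by apply/subsetP => J; rewrite !inE leqn0 cards_eq0.
pose add (p : option T * {set T}) := if p.1 is Some x then x |: p.2 else p.2.
have sub_img : [set J : {set T} | #|J| <= m.+1] \subset
    add @: setX [set: option T] [set J : {set T} | #|J| <= m].
  apply/subsetP => J; rewrite inE => leJ.
  have [-> | [x xJ]] := set_0Vmem J.
    by apply/imsetP; exists (None, set0); rewrite // !inE cards0.
  apply/imsetP; exists (Some x, J :\ x); last by rewrite /add /= setD1K.
  by rewrite !inE /= -ltnS (leq_trans _ leJ) // (cardsD1 x J) xJ.
apply: leq_trans (subset_leq_card sub_img) _.
apply: leq_trans (leq_imset_card _ _) _.
by rewrite cardsX cardsT card_option expnS leq_mul2l IH orbT.
Qed.

Lemma ltn_mul_expn_up_log (K n k : nat) :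
  1 < n -> K * n ^ k < 2 ^ ((K + k) * up_log 2 n).
Proof.
move=> n_gt1; set L := up_log 2 n.
have L_gt0 : 0 < L by rewrite up_log_gt0 n_gt1.
have n_le : n <= 2 ^ L by apply: up_logP.
have nk_le : n ^ k <= (2 ^ L) ^ k by elim: k => // k IHk; rewrite !expnS leq_mul.
apply: (@leq_trans (2 ^ K * n ^ k)).
  rewrite ltn_pmul2r; first exact: ltn_expl.
  by rewrite expn_gt0 ltnW.
rewrite mulnDl expnD leq_mul //; first by rewrite leq_exp2l // leq_pmulr.
by rewrite mulnC expnM.
Qed.

Section Instances.
Variables (q k n : nat) (Gamma : {set {set {ffun 'I_k -> 'Z_q}}}).
Implicit Types (c : constraint q k n) (I J : {set constraint q k n})
  (l : seq (constraint q k n)).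

Lemma Sat_set0 : Sat (set0 : {set constraint q k n}) = setT.
Proof. by apply/setP => a; rewrite !inE; apply/forall_inP => c; rewrite inE. Qed.

Lemma Sat_setU1 c I : Sat (c |: I) = Sat I :&: [set a | csat a c].
Proof.
apply/setP => a; rewrite !inE.
apply/forall_inP/andP => [sat_cI | [/forall_inP sat_I sat_c] c'].
  split; last by apply: sat_cI; rewrite !inE eqxx.
  by apply/forall_inP => c' c'I; apply: sat_cI; rewrite !inE c'I orbT.
by rewrite !inE => /orP[/eqP-> // | /sat_I].
Qed.

Lemma Sat_subset [I J] : J \subset I -> Sat I \subset Sat J.
Proof.
move=> JI; apply/subsetP => a; rewrite !inE => /forall_inP sat_I.
by apply/forall_inP => c /(subsetP JI) /sat_I.
Qed.

Lemma instance_of_rcons l c : instance_of (rcons l c) = c |: instance_of l.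
Proof. by apply/setP => c'; rewrite !inE mem_rcons inE. Qed.

Lemma instance_of_cat_enum I J : instance_of (enum I ++ enum J) = I :|: J.
Proof. by apply/setP => c; rewrite !inE mem_cat !mem_enum. Qed.

Lemma is_instance_subset [I J] :
  J \subset I -> is_instance Gamma I -> is_instance Gamma J.
Proof. by move=> JI /forall_inP valid_I; apply/forall_inP => c /(subsetP JI) /valid_I. Qed.

Lemma stream_ok_is_instance l : stream_ok Gamma l -> is_instance Gamma (instance_of l).
Proof. by move=> /allP valid_l; apply/forall_inP => c; rewrite inE => /valid_l. Qed.

Lemma stream_ok_enum I : is_instance Gamma I -> stream_ok Gamma (enum I).
Proof. by move=> /forall_inP valid_I; apply/allP => c; rewrite mem_enum => /valid_I. Qed.

Lemma exists_nonredundant_subset I :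
  exists J, [/\ J \subset I, nonredundant J & Sat J = Sat I].
Proof.
have [m] := ubnP #|I|; elim: m I => // m IH I /ltnSE leIm.
have [nrI | ] := boolP (nonredundant I); first by exists I.
rewrite negb_forall => /existsP[c]; rewrite negb_imply negbK => /andP[cI /eqP redc].
have [|J [JI nrJ SatJ]] := IH (I :\ c); first by rewrite (cardsD1 c I) cI in leIm.
by exists J; split; rewrite // ?SatJ // (subset_trans JI) ?subD1set.
Qed.

Lemma nonredundant_witness I c : c \in I -> ~~ redundant I c ->
  exists2 a, a \in Sat (I :\ c) & ~~ csat a c.
Proof.
move=> cI nrc; apply/exists_inP; apply: contraR nrc => /exists_inPn no_a.
rewrite /redundant eqEsubset (Sat_subset (subD1set I c)) andbT.
apply/subsetP => a sat_a; rewrite -(setD1K cI) Sat_setU1 in_setI sat_a inE.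
exact/negbNE/no_a.
Qed.

End Instances.

Section Deterministic.
Variables (q k n : nat) (Gamma : {set {set {ffun 'I_k -> 'Z_q}}}).

(* The memory state is the position of the current solution set in [L]. *)
Lemma det_alg_of_Sat_seq s (L : seq {set {ffun 'I_n -> 'Z_q}}) :
  size L <= 2 ^ s ->
  (forall l, stream_ok Gamma l -> Sat (instance_of l) \in L) ->
  exists A : det_alg q k n s, det_decides Gamma A.
Proof.
move=> sizeL Sat_in_L.
pose code S : 'I_(2 ^ s) := insubd (Ordinal (expn_gt0 2 s)) (index S L).
pose decode (u : 'I_(2 ^ s)) := nth setT L u.
have codeK S : S \in L -> decode (code S) = S.
  move=> SL; rewrite /decode val_insubd -index_mem in SL *.
  by rewrite (leq_trans SL sizeL) nth_index // -index_mem.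
pose step u (c : constraint q k n) := code (decode u :&: [set a | csat a c]).
pose init := code (Sat (instance_of [::] : {set constraint q k n})).
exists (DetAlg init step (fun u => decode u != set0)) => l ok_l; rewrite /d_run /=.
suff -> : foldl step init l = code (Sat (instance_of l)) by rewrite codeK ?Sat_in_L.
elim/last_ind: l ok_l => [//|l c IH].
rewrite /stream_ok all_rcons => /andP[_ ok_l].
by rewrite foldl_rcons IH // /step codeK ?Sat_in_L // instance_of_rcons Sat_setU1.
Qed.

Definition nonredundant_instances : {set {set constraint q k n}} :=
  [set J | is_instance Gamma J && nonredundant J].

Lemma card_nonredundant_instances :
  #|nonredundant_instances| <= #|{: constraint q k n}|.+1 ^ NRD n Gamma.
Proof.
apply: leq_trans (card_small_sets _ _); apply/subset_leq_card/subsetP => J.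
by rewrite !inE => instJ; apply: leq_bigmax_cond.
Qed.

Lemma det_alg_NRD s : #|{: constraint q k n}|.+1 ^ NRD n Gamma <= 2 ^ s ->
  exists A : det_alg q k n s, det_decides Gamma A.
Proof.
move=> card_le.
apply: (@det_alg_of_Sat_seq s [seq Sat J | J <- enum nonredundant_instances]).
  by rewrite size_map -cardE (leq_trans card_nonredundant_instances).
move=> l /stream_ok_is_instance inst_l.
have [J [JI nrJ <-]] := exists_nonredundant_subset (instance_of l).
by apply: map_f; rewrite mem_enum inE nrJ (is_instance_subset JI).
Qed.

End Deterministic.

Lemma det_alg_NRD_log (q k : nat) (Gamma : {set {set {ffun 'I_k -> 'Z_q}}}) :
  exists C N0 : nat, forall n : nat, N0 <= n ->
    exists A : det_alg q k n (C * NRD n Gamma * up_log 2 n), det_decides Gamma A.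
Proof.
pose K := #|{: {set {ffun 'I_k -> 'Z_q}}}| * #|{: {ffun 'I_k -> 'Z_q}}|.
exists (K + k), 2 => n n_gt1; apply: det_alg_NRD.
have -> : #|{: constraint q k n}| = K * n ^ k.
  by rewrite !card_prod mulnAC [#|{: {ffun 'I_k -> 'I_n}}|]card_ffun !card_ord.
rewrite mulnAC expnM (leq_trans (_ : _ <= (2 ^ ((K + k) * up_log 2 n)) ^ NRD n Gamma)) //.
by elim: (NRD n Gamma) => // e IHe; rewrite !expnS leq_mul // ltn_mul_expn_up_log.
Qed.

Section Probes.
Variables (q k n : nat) (Gamma : {set {set {ffun 'I_k -> 'Z_q}}}).
Implicit Types (c : constraint q k n) (I S : {set constraint q k n})
  (a b e : {ffun 'I_n -> 'Z_q}).

Definition cshift c e : constraint q k n := (c.1, [ffun j => c.2 j + e (c.1.2 j)])%R.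

Lemma csat_cshift a c e : csat a (cshift c e) = csat (a + e)%R c.
Proof.
rewrite /csat /=; congr (_ \in c.1.1).
by apply/ffunP => j; rewrite !ffunE [(c.2 j + _)%R]addrC addrA.
Qed.

Lemma cvalid_cshift c e : cvalid Gamma c -> cvalid Gamma (cshift c e).
Proof.
case/andP=> inGamma /'forall_forallP consistent; rewrite /cvalid inGamma.
apply/'forall_forallP => j1 j2; apply/implyP => /= same_var.
by rewrite !ffunE (eqP (implyP (consistent j1 j2) same_var)) (eqP same_var).
Qed.

(* Otherwise satisfying [c] would be preserved by translation by [b - a], and [q - 1] such
   translations lead from [b] back to [a]. *)
Lemma shift_separates c a b : 1 < q -> ~~ csat a c -> csat b c ->
  exists e, csat a (cshift c e) && ~~ csat b (cshift c e).
Proof.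
move=> q_gt1 nsat_a sat_b; apply/existsP; apply: contraNT nsat_a.
rewrite negb_exists => /forallP no_e.
pose d := (b - a)%R.
have step x : csat x c -> csat (x + d)%R c.
  move=> sat_x; have := no_e (x - a)%R.
  by rewrite !csat_cshift [(a + _)%R]addrC subrK sat_x negbK addrCA.
have sat_mul j : csat (a + d *+ j.+1)%R c.
  elim: j => [|j IHj]; first by rewrite mulr1n addrC subrK.
  by rewrite mulrS [(d + _)%R]addrC addrA; apply: step.
have dq0 : (d *+ q = 0)%R.
  by apply/ffunP => v; rewrite ffunMnE !ffunE -mulr_natr pchar_Zp // mulr0.
by have := sat_mul q.-1; rewrite prednK ?(ltnW q_gt1) // dq0 addr0.
Qed.

Lemma exists_probe I c : 1 < q -> is_instance Gamma I -> c \in I -> ~~ redundant I c ->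
  exists T, is_instance Gamma T /\
    forall S, S \subset I -> satisfiable (S :|: T) = (c \notin S).
Proof.
move=> q_gt1 instI cI /(nonredundant_witness cI)[a sat_a nsat_a].
have valid_c : cvalid Gamma c by move/forall_inP: instI; apply.
exists [set c' | [&& cvalid Gamma c', c'.1 == c.1 & csat a c']]; split.
  by apply/forall_inP => c'; rewrite inE => /and3P[].
move=> S SI; apply/set0Pn/idP => [[b] | cNS].
  rewrite inE => /forall_inP sat_b; apply/negP => cS.
  have [|e /andP[sat_a_e]] := shift_separates q_gt1 nsat_a (sat_b c _).
    by rewrite inE cS.
  by rewrite sat_b // !inE /= cvalid_cshift // eqxx sat_a_e orbT.
exists a; rewrite inE; apply/forall_inP => c'; rewrite !inE => /orP[c'S | /and3P[//]].
move: sat_a; rewrite inE => /forall_inP; apply; rewrite !inE (subsetP SI) // andbT.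
by apply: contraNneq cNS => <-.
Qed.

End Probes.

Lemma sum_mul_eq_indicator (R : pzSemiRingType) (T : finType) (F : T -> R) (v : T) :
  (\sum_u F u * (u == v)%:R = F v)%R.
Proof.
rewrite (bigD1 v) //= eqxx mulr1 big1 ?addr0 // => u /negbTE ->.
by rewrite mulr0.
Qed.

Section Distributions.
Variables (R : realDomainType) (T : finType).
Implicit Types (d F : T -> R).
Local Open Scope ring_scope.

Definition distribution d := (forall t, 0 <= d t) /\ \sum_t d t = 1.

Lemma distribution_mean_in01 d F : distribution d ->
  (forall t, 0 <= F t <= 1) -> 0 <= \sum_t d t * F t <= 1.
Proof.
move=> [d_ge0 d_sum1] F01; apply/andP; split.
  by apply: sumr_ge0 => t _; rewrite mulr_ge0 // (andP (F01 t)).1.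
rewrite -[leRHS]d_sum1 ler_sum // => t _.
by rewrite ler_piMr // (andP (F01 t)).2.
Qed.

Lemma exists_le_mean d F : distribution d -> exists t, F t <= \sum_u d u * F u.
Proof.
move=> [d_ge0 d_sum1].
have [t0 _] : exists t0 : T, true.
  apply/existsP; apply: contra_eqT d_sum1 => /existsPn T0.
  by rewrite big_pred0 1?eq_sym ?oner_eq0 // => t; have := T0 t.
exists [arg min_(t < t0) F t]%O; case: arg_minP => // t _ t_min.
rewrite -[leLHS]mul1r -d_sum1 mulr_suml ler_sum // => u _.
by move: (t_min u isT); apply: ler_wpM2l.
Qed.

End Distributions.

Section RandomizedRuns.
Variables (q k n : nat) (R : realType) (s : nat) (A : rand_alg q k n R s).
Local Notation state := 'I_(2 ^ s).
Implicit Types (d : state -> R) (u v : state) (l : seq (constraint q k n)).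
Local Open Scope ring_scope.

Definition r_run d l : state -> R :=
  foldl (fun d c v => \sum_u d u * r_step A u c v) d l.

Definition r_accept_from u l := \sum_v r_run (fun w => (u == w)%:R) l v * r_out A v.

Lemma r_run_linear d l v : r_run d l v = \sum_u d u * r_run (fun w => (u == w)%:R) l v.
Proof.
elim: l d => [|c l IH] d /=; first by rewrite sum_mul_eq_indicator.
rewrite IH; under [RHS]eq_bigr => u _ do rewrite IH big_distrr.
rewrite exchange_big /=; apply: eq_bigr => w _.
rewrite big_distrl /=; apply: eq_bigr => u _.
by under [in RHS]eq_bigr => x _ do rewrite mulrC eq_sym; rewrite sum_mul_eq_indicator mulrA.
Qed.

Lemma r_accept_cat l1 l2 :
  r_accept A (l1 ++ l2) = \sum_u r_dist A l1 u * r_accept_from u l2.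
Proof.
rewrite /r_accept /r_dist foldl_cat -/(r_run _ l2).
under eq_bigr => v _ do rewrite r_run_linear big_distrl /=.
rewrite exchange_big /=; apply: eq_bigr => u _.
by rewrite /r_accept_from big_distrr /=; apply: eq_bigr => v _; rewrite mulrA.
Qed.

Hypothesis wf : rand_wf A.

Lemma r_run_distribution d l : distribution d -> distribution (r_run d l).
Proof.
have [_ [_ [step_distr _]]] := wf.
elim: l d => [|c l IH] d // [d_ge0 d_sum1]; apply: IH; split.
  move=> v; apply: sumr_ge0 => u _; rewrite mulr_ge0 //.
  by have [->] := step_distr u c.
rewrite exchange_big /= -[RHS]d_sum1; apply: eq_bigr => u _.
by rewrite -big_distrr /= (step_distr u c).2 mulr1.
Qed.

Lemma r_dist_distribution l : distribution (r_dist A l).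
Proof. by have [init_ge0 [init_sum1 _]] := wf; apply: r_run_distribution. Qed.

Lemma r_accept_from_in01 u l : 0 <= r_accept_from u l <= 1.
Proof.
have [_ [_ [_ out_in01]]] := wf.
apply: distribution_mean_in01 => //; apply: r_run_distribution; split.
  by move=> v; rewrite ler0n.
rewrite -[RHS](sum_mul_eq_indicator (fun=> 1) u).
by apply: eq_bigr => v _; rewrite mul1r eq_sym.
Qed.

End RandomizedRuns.

Section HalfPowers.
Variable R : realType.
Local Open Scope ring_scope.

Definition halfpow (e : R) : R := expR (- (ln 2 * e)).

Lemma expR_ln2 : expR (ln 2) = 2 :> R.
Proof. by rewrite lnK // posrE. Qed.

Lemma ln2_ge0 : 0 <= ln 2 :> R.
Proof. by rewrite ltW // ln_gt0 // ltr1n. Qed.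

Lemma halfpow_sum (I : Type) (r : seq I) (F : I -> R) :
  \prod_(i <- r) halfpow (F i) = halfpow (\sum_(i <- r) F i).
Proof. by rewrite /halfpow -expR_sum mulr_sumr sumrN. Qed.

Lemma halfpow_pair_le e : 0 <= e <= 1 -> halfpow e + halfpow (1 - e) <= 3 / 2.
Proof.
move=> /andP[e_ge0 e_le1].
set y := halfpow e; have y_gt0 : 0 < y := expR_gt0 _.
have -> : halfpow (1 - e) = 2^-1 * y^-1.
  by rewrite /y /halfpow mulrBr mulr1 opprB expRD !expRN invrK expR_ln2 mulrC.
have y_le1 : y <= 1 by rewrite -expR0 ler_expR oppr_le0 mulr_ge0 ?ln2_ge0.
have y_ge : 2^-1 <= y.
  by rewrite -expR_ln2 -expRN /y /halfpow ler_expR lerN2 ler_piMr ?ln2_ge0.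
rewrite -subr_ge0.
have -> : 3 / 2 - (y + 2^-1 * y^-1) = (2 * y - 1) * (1 - y) / (2 * y).
  by field; rewrite gt_eqF.
by apply: divr_ge0; [apply: mulr_ge0 | ]; lra.
Qed.

End HalfPowers.

Section CubeBound.
Variable R : realFieldType.
Local Open Scope ring_scope.

Lemma cube_bound (N : nat) (m t : R) :
  0 <= m -> 0 < t -> t ^+ 3 = 2 ^+ N ->
  2 ^+ N <= m * (t * (3 / 2) ^+ N) -> 32 ^+ N <= 27 ^+ N * m ^+ 3.
Proof.
move=> m_ge0 t_gt0 t3 le_2N.
set P : R := 2 ^+ N; set h : R := (3 / 2) ^+ N.
have P_gt0 : 0 < P by rewrite exprn_gt0.
have h_ge0 : 0 <= h by apply: exprn_ge0; lra.
have : P ^+ 3 <= (m * (t * h)) ^+ 3.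
  by rewrite lerXn2r // nnegrE ?(ltW P_gt0) // !mulr_ge0 // ltW.
rewrite !exprMn t3 -/P exprSr mulrCA [P * _]mulrC => cube.
have P2_le : P ^+ 2 <= m ^+ 3 * h ^+ 3 by rewrite -(ler_pM2r P_gt0).
have -> : (32 : R) ^+ N = P ^+ 2 * 8 ^+ N.
  by rewrite -exprM mulnC exprM -exprMn; congr (_ ^+ _); rewrite -natrX -natrM.
have -> : (27 : R) ^+ N = h ^+ 3 * 8 ^+ N.
  by rewrite -exprM mulnC exprM -exprMn; congr (_ ^+ _); field.
by rewrite [h ^+ 3 * _ * _]mulrAC ler_pM2r ?exprn_gt0 // mulrC.
Qed.

End CubeBound.

(* [N] bits [x] are encoded as a random memory state with law [D x]; bit [i] is read off
   state [u] as [false] with probability [g i u]. *)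
Section RandomAccessCode.
Variables (R : realType) (M : finType) (N : nat).
Variables (D : {ffun 'I_N -> bool} -> M -> R) (g : 'I_N -> M -> R).
Local Open Scope ring_scope.

Let err (x : {ffun 'I_N -> bool}) i u := if x i then g i u else 1 - g i u.
Let total_err (x : {ffun 'I_N -> bool}) u := \sum_i err x i u.
Let B := N%:R / 3 : R.
Let low x u : bool := total_err x u <= B.

Hypothesis D_distribution : forall x, distribution (D x).
Hypothesis g_in01 : forall i u, 0 <= g i u <= 1.
Hypothesis err_le : forall x i, \sum_u D x u * err x i u <= 1 / 3.

Lemma low_error_state x : exists u, low x u.
Proof.
have [u le_mean] := exists_le_mean (total_err x) (D_distribution x).
exists u; apply: le_trans le_mean _.
under eq_bigr do rewrite mulr_sumr.
rewrite exchange_big /=; apply: le_trans (ler_sum _ (fun i _ => err_le x i)) _.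
by rewrite sumr_const card_ord -mulr_natl /B; lra.
Qed.

(* Weight [x] by [\prod_i halfpow (err x i u) = 2^(-total_err x u)]: a low-error [x] weighs
   at least [2^(-N/3)], and the total weight factors into [N] sums, each at most [3/2]. *)
Lemma low_error_count u :
  \sum_(x : {ffun 'I_N -> bool}) (low x u)%:R <= expR (ln 2 * B) * (3 / 2) ^+ N.
Proof.
have ind_le x : (low x u)%:R <= expR (ln 2 * B) * \prod_i halfpow (err x i u).
  rewrite halfpow_sum -expRD.
  case: (boolP (low x u)) => [low_xu | _]; last exact/ltW/expR_gt0.
  apply: le_trans (expR_ge1Dx _); rewrite lerDl subr_ge0.
  by move: low_xu; apply: ler_wpM2l; exact: ln2_ge0.
apply: le_trans (ler_sum _ (fun x _ => ind_le x)) _.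
rewrite -mulr_sumr ler_wpM2l ?(ltW (expR_gt0 _)) //.
rewrite /err -(bigA_distr_bigA (fun i b => halfpow (if b then g i u else 1 - g i u))) /=.
have -> : (3 / 2 : R) ^+ N = \prod_(i < N) (3 / 2) by rewrite prodr_const card_ord.
apply: ler_prod => i _; rewrite big_bool /= halfpow_pair_le // andbT.
by rewrite addr_ge0 // ltW // expR_gt0.
Qed.

Lemma pow2_le_states : 2 ^+ N <= #|M|%:R * (expR (ln 2 * B) * (3 / 2) ^+ N).
Proof.
have cover x : 1 <= \sum_u (low x u)%:R :> R.
  have [u low_xu] := low_error_state x.
  rewrite (bigD1 u) //= low_xu lerDl; apply: sumr_ge0 => v _; exact: ler0n.
have -> : (2 : R) ^+ N = \sum_(x : {ffun 'I_N -> bool}) 1.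
  by rewrite sumr_const card_ffun card_bool card_ord natrX.
apply: le_trans (ler_sum _ (fun x _ => cover x)) _; rewrite exchange_big /=.
apply: le_trans (ler_sum _ (fun u _ => low_error_count u)) _.
by rewrite sumr_const [leRHS]mulr_natl.
Qed.

Theorem random_access_code_bound : (32 ^ N <= 27 ^ N * #|M| ^ 3)%N.
Proof.
rewrite -(ler_nat R) natrM !natrX.
apply: (@cube_bound _ _ _ (expR (ln 2 * B)) _ (expR_gt0 _) _ pow2_le_states) => //.
rewrite -expRM_natr (_ : ln 2 * B * 3%:R = N%:R * ln 2) ?expRM_natl ?expR_ln2 //.
by rewrite /B; field.
Qed.

End RandomAccessCode.

Lemma NRD_attained (q k n : nat) (Gamma : {set {set {ffun 'I_k -> 'Z_q}}}) :
  exists I : {set constraint q k n},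
    [/\ is_instance Gamma I, nonredundant I & #|I| = NRD n Gamma].
Proof.
have [|I /andP[instI nrI] NRD_I] := eq_bigmax_cond (fun I : {set constraint q k n} => #|I|)
    (A := [pred I | is_instance Gamma I && nonredundant I]).
  apply/card_gt0P; exists set0; rewrite !inE.
  by apply/andP; split; apply/forall_inP => c; rewrite inE.
by exists I; split; last exact/esym/NRD_I.
Qed.

Lemma NRD_gt0 (q k n : nat) (Gamma : {set {set {ffun 'I_k -> 'Z_q}}}) :
  k <= n -> nontrivial Gamma -> 0 < NRD n Gamma.
Proof.
move=> le_kn /andP[_ /exists_inP[R0 R0_Gamma]].
rewrite -properT => /properP[_ [t _ tNR0]].
pose f : {ffun 'I_k -> 'I_n} := [ffun j => widen_ord le_kn j].
have f_inj : injective f by move=> j1 j2; rewrite !ffunE => /(congr1 val) /= /val_inj.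
have [a a_f] : exists a : {ffun 'I_n -> 'Z_q}, forall j, a (f j) = t j.
  exists [ffun v => if [pick j | f j == v] is Some j then t j else 0%R] => j.
  by rewrite ffunE; case: pickP => [j' /eqP /f_inj -> // | /(_ j)]; rewrite eqxx.
pose c : constraint q k n := (R0, f, [ffun=> 0%R]).
have nsat_a : ~~ csat a c.
  apply: contra tNR0; rewrite /csat; congr (_ \in R0).
  by apply/ffunP => j; rewrite ffunE a_f ffunE addr0.
apply: leq_trans (leq_bigmax_cond [set c] _); first by rewrite cards1.
rewrite /nonredundant; apply/andP; split; apply/forall_inP => c'; rewrite inE => /eqP ->.
  by rewrite /cvalid R0_Gamma; apply/'forall_forallP => j1 j2; rewrite !ffunE eqxx implybT.
rewrite /redundant setDv Sat_set0 eq_sym; apply/negP => /eqP/setP/(_ a).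
by rewrite !inE => /forall_inP/(_ c); rewrite inE eqxx => /(_ isT); apply/negP.
Qed.

Lemma rand_decides_NRD (R : realType) (q k n s : nat)
    (Gamma : {set {set {ffun 'I_k -> 'Z_q}}}) (A : rand_alg q k n R s) :
  1 < q -> rand_decides Gamma A -> 32 ^ NRD n Gamma <= 27 ^ NRD n Gamma * 8 ^ s.
Proof.
move=> q_gt1 [wf correct].
have [I [instI nrI <-]] := NRD_attained n Gamma.
pose c (i : 'I_#|I|) := enum_val i.
have cI i : c i \in I := enum_valP i.
have [T T_probe] := fin_all_exists (fun i =>
  exists_probe q_gt1 instI (cI i) (forall_inP nrI _ (cI i))).
pose S (x : {ffun 'I_#|I| -> bool}) := [set c i | i in [set i | x i]].
have SI x : S x \subset I by apply/subsetP => _ /imsetP[i _ ->].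
have cS x i : (c i \in S x) = x i by rewrite mem_imset ?inE //; exact: enum_val_inj.
pose D x := r_dist A (enum (S x)).
pose g i u := r_accept_from A u (enum (T i)).
have := @random_access_code_bound R 'I_(2 ^ s) _ D g.
rewrite card_ord -expnM [s * 3]mulnC expnM; apply=> [x | i u | x i].
- exact: r_dist_distribution.
- exact: r_accept_from_in01.
have [instT satST] := T_probe i.
have ok : stream_ok Gamma (enum (S x) ++ enum (T i)).
  rewrite /stream_ok all_cat; apply/andP; split; apply: stream_ok_enum => //.
  exact: is_instance_subset (SI x) instI.
have := correct _ ok; rewrite instance_of_cat_enum satST // cS r_accept_cat.
case: (x i) => //= accept_ge.
under eq_bigr do rewrite mulrBr mulr1.
by rewrite sumrB (r_dist_distribution wf _).2; lra.
Qed.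

Lemma ltn_expn_mix (a b c e N s : nat) : 0 < e -> 0 < N -> 0 < b ->
  a ^ e * b < c ^ e -> e * s <= N -> a ^ N * b ^ s < c ^ N.
Proof.
move=> e_gt0 N_gt0 b_gt0 lt_e le_sN; rewrite -(ltn_exp2r _ _ e_gt0).
apply: (@leq_ltn_trans ((a ^ e * b) ^ N)).
  rewrite !expnMn -!expnM [N * e]mulnC leq_mul2l leq_pexp2l ?orbT //.
  by rewrite mulnC.
by rewrite -expnM [N * e]mulnC expnM ltn_exp2r.
Qed.

Lemma pow_27_8_lt_32 (N s : nat) : 0 < N -> 20 * s <= N -> 27 ^ N * 8 ^ s < 32 ^ N.
Proof.
have key : 27 ^ 20 * 8 < 32 ^ 20 by lia.
by move=> N_gt0; apply: (@ltn_expn_mix 27 8 32 20 N s isT N_gt0 isT key).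
Qed.

Theorem theorem1p1 (q k : nat) (Gamma : {set {set {ffun 'I_k -> 'Z_q}}}) :
  2 <= q -> 1 <= k -> nontrivial Gamma ->
  (* (a) deterministic algorithm with O(NRD_n(Gamma) log n) bits *)
  (exists C N0 : nat, forall n : nat, N0 <= n ->
     exists A : det_alg q k n (C * NRD n Gamma * up_log 2 n),
       det_decides Gamma A)
  /\
  (* (b) no randomized algorithm uses o(NRD_n(Gamma)) bits *)
  (forall (R : realType) (s : nat -> nat),
     (forall n : nat, exists A : rand_alg q k n R (s n), rand_decides Gamma A) ->
     ~ (forall m : nat, exists N : nat, forall n : nat, N <= n ->
          m.+1 * s n <= NRD n Gamma)).
Proof.
move=> q_gt1 _ nontriv; split; first exact: det_alg_NRD_log.
move=> R s decides sublinear.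
have [N0 le_sNRD] := sublinear 19.
have [A decA] := decides (N0 + k).
have := rand_decides_NRD q_gt1 decA; apply/negP; rewrite -ltnNge.
apply: pow_27_8_lt_32; first exact: NRD_gt0 (leq_addl _ _) nontriv.
exact: le_sNRD (leq_addr _ _).
Qed.
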